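(* Let $(G,k,M^*,M)$ be a critical tuple and let $\mathcal{C}$ be a set of directed cycles of $G_M$, each with $w_M(C)\le0$, such that every $e\in E^+(C^+)$ is contained in some cycle of $\mathcal{C}$ and, for every $C\in\mathcal{C}$, $C\cap C^+$ is a single path. Then there exists a subset $\mathcal{C}'\subseteq\mathcal{C}$ such that every $e\in E^+(C^+)$ is contained in some cycle of $\mathcal{C}'$, for every $C\in\mathcal{C}'$ the set $C\cap C^+$ is a single path, and every $e\in E^-(C^+)$ is contained in at most two cycles of $\mathcal{C}'$.
   Context: $R(H)$ is the set of red edges of an edge set $H$. For a perfect matching $M$ of a red/blue edge-colored bipartite graph $G=(A\sqcup B,E)$, $G_M$ is the directed graph on $A\sqcup B$ with edges of $M$ oriented from $A$ to $B$ and other edges from $B$ to $A$, weighted by $w_M(e)=0$ for blue $e$, $-1$ for red $e\in M$, $+1$ for red $e\notin M$; $E^+(H)$ (resp. $E^-(H)$) is the set of red edges of $H$ not in $M$ (resp. in $M$), $w_M(H)=|E^+(H)|-|E^-(H)|$. Cycles are identified with edge sets. For an edge $e$, $M^e$ is a perfect matching containing $e$ with the minimum number of red edges among those containing $e$. A tuple $(G,k,M^*,M)$ is critical if: every edge of $G$ lies in some perfect matching; $|R(M^* )|=k$; $|R(M)|<\frac13k$; every directed cycle $C$ of $G_M$ with $w_M(C)>0$ has $|E^+(C)|>\frac23k$; and $|R(M^e)|<\frac13k$ for every red $e\in M^*\setminus M$. $C^+$ is the unique positive-weight directed cycle of $G_M$ contained in $M\Delta M^*$. *)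

From mathcomp Require Import all_boot all_order all_algebra.
Set Implicit Arguments. Unset Strict Implicit. Unset Printing Implicit Defensive.
Import Order.TTheory GRing.Theory Num.Theory.

(* A red/blue edge-coloured bipartite graph G = (A ⊔ B, E): a finite type E of
   edges, each edge e joining ea e ∈ A and eb e ∈ B; the red edges form the set
   red (all other edges are blue).  Simplicity is imposed separately in the theorem. *)
Section Defs.
Variables (A B E : finType) (ea : E -> A) (eb : E -> B).

Definition perfect_matching (N : {set E}) : bool :=
  [forall a, #|[set e in N | ea e == a]| == 1%N] &&
  [forall b, #|[set e in N | eb e == b]| == 1%N].

Definition dtail (M : {set E}) (e : E) : A + B :=
  if e \in M then inl (ea e) else inr (eb e).
Definition dhead (M : {set E}) (e : E) : A + B :=
  if e \in M then inr (eb e) else inl (ea e).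

Definition dcycle (M C : {set E}) : Prop :=
  exists s : seq E,
    [/\ s != [::], uniq (map (dhead M) s),
        cycle (fun e f => dhead M e == dtail M f) s & C = [set e in s]].

Definition dpath (M P : {set E}) : Prop :=
  exists (e : E) (s : seq E),
    [/\ path (fun x y => dhead M x == dtail M y) e s,
        uniq (dtail M e :: map (dhead M) (e :: s)) & P = [set x in e :: s]].

Variable red : {set E}.

Definition Eplus (M H : {set E}) : {set E} := [set e in H | (e \in red) && (e \notin M)].
Definition Eminus (M H : {set E}) : {set E} := [set e in H | (e \in red) && (e \in M)].
Definition weight (M H : {set E}) : int := (#|Eplus M H|%:Z - #|Eminus M H|%:Z)%R.

Definition is_Me (e : E) (N : {set E}) : Prop :=
  [/\ perfect_matching N, e \in N &
      forall N', perfect_matching N' -> e \in N' -> #|N :&: red| <= #|N' :&: red|].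

Definition critical (k : nat) (Ms M : {set E}) : Prop :=
  [/\ forall e : E, exists N, perfect_matching N /\ e \in N,
      perfect_matching Ms /\ #|Ms :&: red| = k,
      perfect_matching M /\ 3 * #|M :&: red| < k,
      (forall C, dcycle M C -> (0 < weight M C)%R -> 2 * k < 3 * #|Eplus M C|) &
      (forall e, e \in red -> e \in Ms :\: M ->
         exists N, is_Me e N /\ 3 * #|N :&: red| < k)].

Definition is_Cplus (Ms M Cp : {set E}) : Prop :=
  let D := (M :\: Ms) :|: (Ms :\: M) in
  [/\ dcycle M Cp, (0 < weight M Cp)%R, Cp \subset D &
      forall C, dcycle M C -> (0 < weight M C)%R -> C \subset D -> C = Cp].

End Defs.

From mathcomp Require Import all_boot all_order all_algebra zify.
From Stdlib Require Import Classical.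
Import Order.TTheory GRing.Theory Num.Theory.
Set Implicit Arguments. Unset Strict Implicit. Unset Printing Implicit Defensive.

(* Take a minimal subfamily of the cycles covering E^+(C^+).  Inside the
   directed cycle C^+, the trace C ∩ C^+ of a cycle through an edge e is an
   arc of C^+ around e.  Of three arcs around e, one reaches neither farthest
   forward nor farthest backward from e, so it lies in the union of the other
   two and its cycle could be dropped from the cover, contradicting
   minimality. *)

Lemma uniq_map_inj_in (T1 T2 : eqType) (f : T1 -> T2) (s : seq T1) :
  uniq (map f s) -> {in s &, injective f}.
Proof.
elim: s => [|z s IH] //= /andP[fz_s us] x y.
rewrite !inE => /predU1P[->|xs] /predU1P[->|ys] // fxy.
- by move: fz_s; rewrite fxy map_f.
- by move: fz_s; rewrite -fxy map_f.
- exact: IH.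
Qed.

Lemma iter_cancel (T : Type) (f g : T -> T) : cancel f g ->
  forall k l x, iter k g (iter (k + l) f x) = iter l f x.
Proof. by move=> fK; elim=> // k IH l x; rewrite iterSr addSn iterS fK IH. Qed.

Lemma downclosed_total (p q : nat -> Prop) :
  (forall m n, m <= n -> p n -> p m) -> (forall m n, m <= n -> q n -> q m) ->
  (forall n, p n -> q n) \/ (forall n, q n -> p n).
Proof.
move=> p_down q_down; case: (classic (forall n, p n -> q n)); first by left.
move=> /not_all_ex_not[m not_pq_m]; right=> n qn.
have [pm not_qm] : p m /\ ~ q m by tauto.
case: (leqP m n) => [le_mn|/ltnW le_nm]; last exact: p_down pm.
by case: not_qm; apply: q_down qn.
Qed.

(* Each pair of distinct elements contains one dominated by the other, so at
   most one of three elements escapes domination for each relation. *)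
Lemma dominated_in_triple (U : eqType) (X : {pred U}) (R1 R2 : U -> U -> Prop)
    x y z :
  (forall u v, R1 u v \/ R1 v u) -> (forall u v, R2 u v \/ R2 v u) ->
  [/\ x \in X, y \in X & z \in X] -> [/\ x != y, y != z & z != x] ->
  exists c, [/\ c \in X, exists2 a, a \in X & a != c /\ R1 c a
                       & exists2 b, b \in X & b != c /\ R2 c b].
Proof.
move=> total1 total2 [xX yX zX] [xy yz zx].
pose dominated (R : U -> U -> Prop) c := exists2 a, a \in X & a != c /\ R c a.
have dominated_pair R : (forall u v, R u v \/ R v u) ->
    forall u v, u \in X -> v \in X -> u != v -> dominated R u \/ dominated R v.
  move=> totalR u v uX vX uv.
  case: (totalR u v) => Ruv; [left; exists v | right; exists u] => //.
  by rewrite eq_sym.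
apply: NNPP => none.
have not_both c : c \in X -> ~ (dominated R1 c /\ dominated R2 c).
  by move=> cX [d1 d2]; apply: none; exists c.
have [d1 d2] := (dominated_pair _ total1, dominated_pair _ total2).
have := not_both x xX; have := not_both y yX; have := not_both z zX.
have := d1 x y xX yX xy; have := d1 y z yX zX yz; have := d1 z x zX xX zx.
have := d2 x y xX yX xy; have := d2 y z yX zX yz; have := d2 z x zX xX zx.
tauto.
Qed.

Definition covers {T : finType} (X : {set {set T}}) (F : {set T}) :=
  F \subset \bigcup_(C in X) C.

Lemma minimal_cover_irredundant (T : finType) (X : {set {set T}}) F c :
  minset (covers^~ F) X -> c \in X -> ~ F :&: c \subset \bigcup_(C in X :\ c) C.
Proof.
case/minsetP=> coverX minX cX Fc_sub.
suff /minX/(_ (subD1set X c)) : covers (X :\ c) F.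
  by move=> eqX; move: cX; rewrite -eqX !inE eqxx.
apply/subsetP=> e eF; have /bigcupP[C CX eC] := subsetP coverX e eF.
have [Cc | Cc] := eqVneq C c; first by apply: (subsetP Fc_sub); rewrite inE eF -Cc.
by apply/bigcupP; exists C; rewrite // !inE Cc.
Qed.

Section CycleArcs.
Variables (T : finType) (f g : T -> T).
Hypothesis fK : cancel f g.

Definition reach (h : T -> T) e (P : {set T}) n := {subset traject h e n <= P}.

Lemma reach_downclosed h e P m n : m <= n -> reach h e P n -> reach h e P m.
Proof.
move=> le_mn Pn x /trajectP[i lt_im ->]; apply: Pn.
by apply/trajectP; exists i => //; apply: leq_trans le_mn.
Qed.

Lemma reach_total h e P Q :
  (forall n, reach h e P n -> reach h e Q n) \/
  (forall n, reach h e Q n -> reach h e P n).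
Proof. by apply: downclosed_total => m n; apply: reach_downclosed. Qed.

Definition arc_around e (P : {set T}) := forall x, x \in P ->
  (exists2 n, x \in traject f e n & reach f e P n) \/
  (exists2 n, x \in traject g e n & reach g e P n).

Lemma traject_arc_around x0 n e :
  e \in traject f x0 n -> arc_around e [set x in traject f x0 n].
Proof.
case/trajectP=> i lt_in ->{e} x; rewrite inE => /trajectP[j lt_jn ->{x}].
have [le_ij | lt_ji] := leqP i j.
- left; exists (j - i).+1.
    by apply/trajectP; exists (j - i); rewrite // -iterD subnK.
  move=> y /trajectP[k lt_k ->]; rewrite inE -iterD.
  by apply/trajectP; exists (k + i) => //; lia.
- right; exists (i - j).+1.
    apply/trajectP; exists (i - j) => //.
    by rewrite -[in iter i f x0](subnK (ltnW lt_ji)) (iter_cancel fK).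
  move=> y /trajectP[k lt_k ->]; rewrite inE; apply/trajectP; exists (i - k).
    by lia.
  by rewrite -[in iter i f x0](@subnKC k i) ?(iter_cancel fK) //; lia.
Qed.

Lemma arc_around_sub e Pc Pa Pb : arc_around e Pc ->
  (forall n, reach f e Pc n -> reach f e Pa n) ->
  (forall n, reach g e Pc n -> reach g e Pb n) ->
  Pc \subset Pa :|: Pb.
Proof.
move=> arc_c fwd bwd; apply/subsetP=> x /arc_c[[n xn /fwd]|[n xn /bwd]] Pn;
  by rewrite inE Pn ?orbT.
Qed.

Lemma minimal_cover_arcs (X : {set {set T}}) (F S : {set T}) e :
  minset (covers^~ F) X -> F \subset S ->
  {in X, forall C : {set T}, e \in C -> arc_around e (C :&: S)} ->
  #|[set C in X | e \in C]| <= 2.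
Proof.
move=> minX FS arcs; rewrite leqNgt; apply/negP=> /card_gt2P[x [y [z [Xxyz dxyz]]]].
have [c [/setIdP[cX ec] [a /setIdP[aX _] [ac Rca]] [b /setIdP[bX _] [bc Rcb]]]] :=
  dominated_in_triple (fun u v => reach_total f e (u :&: S) (v :&: S))
                      (fun u v => reach_total g e (u :&: S) (v :&: S)) Xxyz dxyz.
have cab := arc_around_sub (arcs c cX ec) Rca Rcb.
apply: (minimal_cover_irredundant minX cX); apply/subsetP=> h /setIP[hF hc].
have /(subsetP cab) : h \in c :&: S by rewrite inE hc (subsetP FS).
by rewrite !inE => /orP[/andP[ha _] | /andP[hb _]]; apply/bigcupP;
  [exists a | exists b]; rewrite // !inE ?ac ?bc.
Qed.

End CycleArcs.

Section DirectedCycles.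
Variables (A B E : finType) (ea : E -> A) (eb : E -> B) (M : {set E}).
Local Notation hd := (dhead ea eb M).
Local Notation tl := (dtail ea eb M).

Lemma dcycle_succ_next s : cycle (fun x y => hd x == tl y) s -> uniq (map hd s) ->
  {in s &, forall x y, hd x == tl y -> y = next s x}.
Proof.
move=> cyc uniq_hd x y xs ys /eqP hd_x.
have <- : prev s y = x.
  apply: (uniq_map_inj_in uniq_hd) => //; first by rewrite mem_prev.
  by rewrite hd_x; apply/eqP: (prev_cycle cyc ys).
by rewrite next_prev // (map_uniq uniq_hd).
Qed.

Lemma dpath_arc_around s (P : {set E}) e :
  cycle (fun x y => hd x == tl y) s -> uniq (map hd s) ->
  P \subset [set x in s] -> dpath ea eb M P -> e \in P ->
  arc_around (next s) (prev s) e P.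
Proof.
move=> cyc uniq_hd Ps [e0 [p [pth _ defP]]] eP.
have ps : all (mem s) (e0 :: p).
  apply/allP=> x xp; have /(subsetP Ps) : x \in P by rewrite defP in_set.
  by rewrite in_set.
have /fpathP[n defp] : fpath (next s) e0 p.
  apply: (sub_in_path _ ps pth) => x y xs ys /=.
  by move/(dcycle_succ_next cyc uniq_hd xs ys) ->.
have defP' : P = [set x in traject (next s) e0 n.+1].
  by rewrite defP defp trajectS.
rewrite defP' in eP *; apply: traject_arc_around.
  exact/prev_next/map_uniq/uniq_hd.
by rewrite inE in eP.
Qed.

End DirectedCycles.

Theorem lemma8 (A B E : finType) (ea : E -> A) (eb : E -> B)
  (red : {set E}) (k : nat) (Ms M Cp : {set E}) (Cs : {set {set E}}) :
  injective (fun e => (ea e, eb e)) ->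
  critical ea eb red k Ms M ->
  is_Cplus ea eb red Ms M Cp ->
  (forall C, C \in Cs -> dcycle ea eb M C /\ (weight red M C <= 0)%R) ->
  (forall e, e \in Eplus red M Cp -> exists2 C, C \in Cs & e \in C) ->
  (forall C, C \in Cs -> dpath ea eb M (C :&: Cp)) ->
  exists Cs' : {set {set E}},
    [/\ Cs' \subset Cs,
        (forall e, e \in Eplus red M Cp -> exists2 C, C \in Cs' & e \in C),
        (forall C, C \in Cs' -> dpath ea eb M (C :&: Cp)) &
        (forall e, e \in Eminus red M Cp -> #|[set C in Cs' | e \in C]| <= 2)].
Proof.
move=> _ _ [[s [_ uniq_hd cyc defCp]] _ _ _] _ coverCs paths.
have cover_all : covers Cs (Eplus red M Cp).
  by apply/subsetP=> e /coverCs[C CCs eC]; apply/bigcupP; exists C.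
have [Cs' minCs' sub_Cs] :=
  minset_exists (P := covers^~ (Eplus red M Cp)) cover_all.
have [cover_min _] := minsetP minCs'.
exists Cs'; split=> //.
- by move=> e /(subsetP cover_min)/bigcupP.
- by move=> C /(subsetP sub_Cs); apply: paths.
move=> e eM.
apply: (minimal_cover_arcs (f := next s) (g := prev s) (S := Cp) minCs').
  by apply/subsetP=> x; rewrite inE => /andP[].
move=> C /(subsetP sub_Cs) CCs eC.
apply: dpath_arc_around cyc uniq_hd _ (paths C CCs) _.
  by rewrite -defCp subsetIr.
by move: eM; rewrite !inE eC => /andP[->].
Qed.
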